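(* Let $n$ be a positive integer and $m = n^2+1$. Let $Q_n = (a_{i,j})_{1\le i,j\le n}$ be the $n\times n$ matrix with entries in $\mathbb{Z}/m\mathbb{Z}$ given by $a_{i,j} = j + (i-1)n$, and let $\rho(Q_n)$ be the $n\times n$ matrix whose $(i,j)$ entry is $a_{j,n-i+1}$. If $\varphi:\mathbb{Z}/m\mathbb{Z}\to\{0,1,-1\}$ is a completely multiplicative function, then $\varphi(\rho(Q_n)) = \varphi(n)\varphi(Q_n)$, where for a matrix $A=(b_{i,j})$ we write $\varphi(A) = (\varphi(b_{i,j}))$.
   Context: A function $\varphi$ on $\mathbb{Z}/m\mathbb{Z}$ is completely multiplicative if $\varphi(ab)=\varphi(a)\varphi(b)$ for all $a,b$. $\varphi$ is applied to matrices entrywise. *)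

From HB Require Import structures.
From mathcomp Require Import all_boot all_order all_algebra.
Set Implicit Arguments. Unset Strict Implicit. Unset Printing Implicit Defensive.
Import GRing.Theory Num.Theory.
Local Open Scope ring_scope.

(* Z/mZ for m = n^2 + 1 >= 2 is 'Z_(n^2+1).  Indices are 0-based: row i, column j
   of type 'I_n correspond to 1-based (i+1, j+1). *)

Definition Qmx (n : nat) : 'M['Z_(n ^ 2 + 1)]_n :=
  \matrix_(i < n, j < n) ((j.+1 + i * n)%N)%:R.

Definition rho (R : Type) (n : nat) (A : 'M[R]_n) : 'M[R]_n :=
  \matrix_(i < n, j < n) A j (rev_ord i).

Definition completely_multiplicative (m : nat) (phi : 'Z_m -> int) : Prop :=
  forall a b : 'Z_m, phi (a * b) = phi a * phi b.

Definition values_in_0_pm1 (m : nat) (phi : 'Z_m -> int) : Prop :=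
  forall x : 'Z_m, phi x \in [:: 0; 1; -1].

From HB Require Import structures.
From mathcomp Require Import all_boot all_order all_algebra.
From mathcomp Require Import zify.
Import GRing.Theory Num.Theory.
Local Open Scope ring_scope.

(* Modulo n^2 + 1 we have i n^2 = -i, so n times the entry j + 1 + i n of Q_n
   is n - i + j n, the entry of rho(Q_n) at the same place: rho(Q_n) = n Q_n.
   A completely multiplicative phi then maps the scaled matrix to phi(n) phi(Q_n). *)

Lemma map_mx_scale (R S : pzRingType) (phi : R -> S) m n (c : R) (A : 'M_(m, n)) :
    (forall a b, phi (a * b) = phi a * phi b) ->
  map_mx phi (c *: A) = phi c *: map_mx phi A.
Proof. by move=> phiM; apply/matrixP => i j; rewrite !mxE phiM. Qed.

Lemma rho_Qmx (n : nat) : (0 < n)%N -> rho (Qmx n) = n%:R *: Qmx n.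
Proof.
move=> n_gt0; apply/matrixP => i j; rewrite !mxE -natrM.
have modulus0 : (n ^ 2 + 1)%:R = 0 :> 'Z_(n ^ 2 + 1).
  by apply: pchar_Zp; rewrite addn1 ltnS expn_gt0 n_gt0.
have i_lt_n := ltn_ord i.
have -> : (n * (j.+1 + i * n) = (rev_ord i).+1 + j * n + i * (n ^ 2 + 1))%N.
  by rewrite /=; nia.
by rewrite [in RHS]natrD [in RHS]natrM modulus0 mulr0 addr0.
Qed.

Theorem corollary2 (n : nat) (hn : (0 < n)%N)
  (phi : 'Z_(n ^ 2 + 1) -> int)
  (hval : values_in_0_pm1 phi) (hmul : completely_multiplicative phi) :
  map_mx phi (rho (Qmx n)) = phi (n%:R) *: map_mx phi (Qmx n).
Proof. by rewrite rho_Qmx // map_mx_scale. Qed.
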